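(* For every $n\ge 9$, there is no permutation $\pi\in\mathfrak{S}_n$ that avoids $123$ and all of whose cycles have length $1$ or $3$; that is, $|\mathfrak{S}^{\{1,3\}}_n(123)|=0$.
   Context: $\mathfrak{S}^{\{1,3\}}_n(123)$ denotes the set of permutations of $[n]$ avoiding the pattern $123$ (no increasing subsequence of length 3 in the one-line notation) whose cycles all have length $1$ or $3$. *)

From mathcomp Require Import all_boot all_order all_fingroup.
Set Implicit Arguments. Unset Strict Implicit. Unset Printing Implicit Defensive.

(* pi avoids 123: no indices i < j < k with pi i < pi j < pi k (one-line notation,
   values compared as naturals). [n] is modelled as 'I_n = {0,...,n-1}. *)
Definition avoids123 (n : nat) (s : 'S_n) : bool :=
  [forall i : 'I_n, forall j : 'I_n, forall k : 'I_n,
     ~~ [&& i < j, j < k, s i < s j & s j < s k]].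

Definition cycles13 (n : nat) (s : 'S_n) : bool :=
  [forall x : 'I_n, (#|porbit s x| == 1) || (#|porbit s x| == 3)].

Definition S13_123 (n : nat) : {set 'S_n} :=
  [set s : 'S_n | avoids123 s && cycles13 s].

From mathcomp Require Import all_boot all_order all_fingroup.
Set Implicit Arguments. Unset Strict Implicit. Unset Printing Implicit Defensive.

(* A 123-avoiding permutation is the union of two decreasing subsequences: its
   left-to-right minima and the remaining entries.  Colour each x by the
   sequence of classes of x, s x, ..., s^(k-1) x.  If x < y have the same
   colour, the pairs (s^i x, s^i y) alternate between ascents and descents, so
   when s^k = 1 with k odd we get y < x.  Hence the colouring is injective and
   n <= 2^k; for cycle type {1,3} this gives n <= 8. *)

Definition lrmin (n : nat) (s : 'S_n) (x : 'I_n) : bool :=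
  [forall y : 'I_n, (y < x) ==> (s x < s y)].

Section Avoids123.

Variables (n : nat) (s : 'S_n).
Hypothesis s_avoids : avoids123 s.

Lemma perm_ord_eq (x y : 'I_n) : (s x == s y :> nat) = (x == y :> nat).
Proof. by rewrite !val_eqE (inj_eq perm_inj). Qed.

Lemma avoids123_lrmin_descent (x y : 'I_n) :
  lrmin s x = lrmin s y -> x < y -> s y < s x.
Proof.
move=> same_class lt_xy.
case min_y: (lrmin s y) same_class => min_x.
  by move/forallP/(_ x)/implyP: min_y; apply.
have /forallPn [z] : ~~ lrmin s x by rewrite min_x.
rewrite negb_imply -leqNgt => /andP [lt_zx le_sxz].
have lt_sxz : s z < s x.
  by rewrite ltn_neqAle le_sxz perm_ord_eq (ltn_eqF lt_zx).
rewrite ltn_neqAle perm_ord_eq (gtn_eqF lt_xy) leqNgt /=.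
apply/negP => lt_sxy.
move/forallP/(_ z)/forallP/(_ x)/forallP/(_ y): s_avoids.
by rewrite lt_zx lt_xy lt_sxz lt_sxy.
Qed.

Lemma avoids123_same_colour_alternate (k : nat) (x y : 'I_n) :
  (forall i, i < k -> lrmin s (iter i s x) = lrmin s (iter i s y)) ->
  x < y -> forall i, i <= k ->
  if odd i then iter i s y < iter i s x else iter i s x < iter i s y.
Proof.
move=> same_colour lt_xy; elim=> [//|i IHi] lt_ik /=.
have := same_colour i lt_ik; have := IHi (ltnW lt_ik).
by case: (odd i) => /= lt_i same_i; apply: avoids123_lrmin_descent.
Qed.

Lemma avoids123_card_le (k : nat) :
  odd k -> (forall x, iter k s x = x) -> n <= 2 ^ k.
Proof.
move=> odd_k s_k.
pose colour x := [ffun i : 'I_k => lrmin s (iter i s x)] : {ffun 'I_k -> bool}.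
suff colour_inj : injective colour.
  by have := leq_card colour colour_inj; rewrite card_ffun card_bool !card_ord.
have no_lt x y : colour x = colour y -> x < y -> False.
  move=> same_xy lt_xy.
  have same i : i < k -> lrmin s (iter i s x) = lrmin s (iter i s y).
    by move=> lt_ik; have /ffunP/(_ (Ordinal lt_ik)) := same_xy; rewrite !ffunE.
  have := avoids123_same_colour_alternate same lt_xy (leqnn k).
  by rewrite odd_k !s_k => /(ltn_trans lt_xy); rewrite ltnn.
move=> x y same_xy; case: (ltngtP x y) => [lt_xy|lt_yx|/val_inj//].
- by case: (no_lt x y).
- by case: (no_lt y x).
Qed.

End Avoids123.

Lemma perm_iter_porbit_dvd (T : finType) (s : {perm T}) (x : T) (m : nat) :
  #|porbit s x| %| m -> iter m s x = x.
Proof.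
case/dvdnP=> q ->; rewrite -permX mulnC expgM permX_fix //.
by rewrite permX iter_porbit.
Qed.

Lemma cycles13_iter3 (n : nat) (s : 'S_n) (x : 'I_n) :
  cycles13 s -> iter 3 s x = x.
Proof.
move/forallP/(_ x)=> card_orbit; apply: perm_iter_porbit_dvd.
by case/orP: card_orbit => /eqP ->.
Qed.

Theorem proposition5p1 (n : nat) : 9 <= n -> #|S13_123 n| = 0.
Proof.
move=> n_ge9; apply: eq_card0 => s; rewrite inE.
apply/negP=> /andP [s_avoids s_cycles].
have := avoids123_card_le s_avoids (isT : odd 3) (fun x => cycles13_iter3 x s_cycles).
by rewrite leqNgt n_ge9.
Qed.
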